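(* Let $a\in\omega\setminus\{0\}$ and $h(n)=2^{(a^n)}$. Then $\mathfrak d(\neq^*,h)\le\mathfrak d(1/a)$ and $\mathfrak b(\neq^*,h)\ge\mathfrak b(1/a)$.
   Context: For bit sequences $x,y\in{}^\omega2$, $x\leftrightarrow y=\{n:x(n)=y(n)\}$; for $Z\subseteq\omega$, $\underline\rho(Z)=\liminf_n|Z\cap[0,n)|/n$. $\mathfrak d(p)$ is the least cardinality of $G\subseteq{}^\omega2$ such that for every $x\in{}^\omega2$ some $y\in G$ has $\underline\rho(x\leftrightarrow y)>p$; $\mathfrak b(p)$ is the least cardinality of $F\subseteq{}^\omega2$ such that for every $y\in{}^\omega2$ some $x\in F$ has $\underline\rho(x\leftrightarrow y)\le p$. A function $y$ is $h$-bounded if $y(n)<h(n)$ for all $n$. $\mathfrak d(\neq^*,h)$ is the least cardinality of a set $G$ of $h$-bounded functions such that for every $x\in{}^\omega\omega$ some $y\in G$ satisfies $x(n)\ne y(n)$ for all but finitely many $n$; $\mathfrak b(\neq^*,h)$ is the least cardinality of $F\subseteq{}^\omega\omega$ such that for every $h$-bounded $y$ some $x\in F$ satisfies $x(n)=y(n)$ for infinitely many $n$. *)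

From Stdlib Require Import Reals Lra Lia List.
From Coquelicot Require Import Coquelicot.
Import ListNotations.
Open Scope R_scope.

(* x <-> y = {n : x n = y n}, as a boolean predicate on nat *)
Definition agree (x y : nat -> bool) : nat -> bool := fun n => Bool.eqb (x n) (y n).

Definition count_below (Z : nat -> bool) (n : nat) : nat :=
  length (filter Z (seq 0 n)).

Definition lower_density (Z : nat -> bool) : Rbar :=
  LimInf_seq (fun n => INR (count_below Z n) / INR n).

Definition card_le {X Y : Type} (A : X -> Prop) (B : Y -> Prop) : Prop :=
  exists f : X -> Y, (forall x, A x -> B (f x)) /\
    (forall x x', A x -> A x' -> f x = f x' -> x = x').

Definition d_witness (p : R) (G : (nat -> bool) -> Prop) : Prop :=
  forall x : nat -> bool, exists y, G y /\ Rbar_lt (Finite p) (lower_density (agree x y)).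

Definition b_witness (p : R) (F : (nat -> bool) -> Prop) : Prop :=
  forall y : nat -> bool, exists x, F x /\ Rbar_le (lower_density (agree x y)) (Finite p).

Definition h_bounded (h : nat -> nat) (y : nat -> nat) : Prop :=
  forall n, (y n < h n)%nat.

Definition dneq_witness (h : nat -> nat) (G : (nat -> nat) -> Prop) : Prop :=
  (forall y, G y -> h_bounded h y) /\
  forall x : nat -> nat, exists y, G y /\ exists N, forall n, (N <= n)%nat -> x n <> y n.

Definition bneq_witness (h : nat -> nat) (F : (nat -> nat) -> Prop) : Prop :=
  forall y : nat -> nat, h_bounded h y ->
    exists x, F x /\ forall N, exists n, (N <= n)%nat /\ x n = y n.

(** Cut ω into consecutive blocks I_n of length a^n; a sequence y ∈ 2^ω is
    coded by the function n ↦ (y restricted to I_n), read as a number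
    below h(n) = 2^(a^n).  Conversely any x ∈ ω^ω is decoded block by block
    into a bit sequence, and its complement x̃ disagrees with y on every I_n
    for which x(n) is the code of y↾I_n.  Since I_0 ∪ … ∪ I_{n-1} has s_n
    elements and s_{n+1} = a s_n + 1, disagreement on all of I_n pushes the
    agreement density at the end of I_n down to s_n/(a s_n + 1) ≤ 1/a.  Hence
    "x(n) = code(y)(n) infinitely often" forces the lower density of
    x̃ ↔ y to be at most 1/a, which yields both inequalities: y ↦ code(y)
    maps d(1/a)-witnesses to d(≠*,h)-witnesses and x ↦ x̃ maps
    b(≠*,h)-witnesses to b(1/a)-witnesses. *)

From Stdlib Require Import Reals Lra Lia List ClassicalEpsilon Classical.
From Coquelicot Require Import Coquelicot.
Open Scope R_scope.

Lemma Inf_seq_le_term (u : nat -> R) (k : nat) : Rbar_le (Inf_seq u) (u k).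
Proof.
  rewrite Inf_opp_sup. apply (Rbar_opp_le (Finite (u k))).
  rewrite Rbar_opp_involutive. exact (Sup_seq_minor_le _ (- u k) k (Rbar_le_refl _)).
Qed.

Lemma LimInf_seq_le_frequently (u : nat -> R) (c : R) :
  (forall N, exists n, (N <= n)%nat /\ u n <= c) -> Rbar_le (LimInf_seq u) c.
Proof.
  intros Hfreq. rewrite LimInf_SupInf_seq. apply Rbar_not_lt_le.
  intros [m Hm]%Sup_seq_minor_lt. destruct (Hfreq m) as [n [Hmn Hn]].
  apply (Rbar_lt_not_le _ _ Hm), Rbar_le_trans with (u (n - m + m)%nat).
  - exact (Inf_seq_le_term (fun k => u (k + m)%nat) (n - m)).
  - now rewrite Nat.sub_add.
Qed.

Lemma frequently_of_not_eventually_not (P : nat -> Prop) :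
  ~ (exists N, forall n, (N <= n)%nat -> ~ P n) ->
  forall N, exists n, (N <= n)%nat /\ P n.
Proof.
  intros Hnot N. apply NNPP. intros Hnone. apply Hnot. exists N.
  intros n HNn Hn. apply Hnone. now exists n.
Qed.

Lemma card_le_image {X Y : Type} (A : X -> Prop) (f : X -> Y) :
  inhabited X -> card_le (fun z => exists x, A x /\ z = f x) A.
Proof.
  intros HX. exists (fun z => epsilon HX (fun x => A x /\ z = f x)). split.
  - intros z Hz. exact (proj1 (epsilon_spec HX _ Hz)).
  - intros z z' Hz Hz' Heq.
    rewrite (proj2 (epsilon_spec HX _ Hz)), (proj2 (epsilon_spec HX _ Hz')).
    now rewrite Heq.
Qed.

Lemma count_below_succ (u : nat -> bool) (n : nat) :
  count_below u (S n) = (count_below u n + Nat.b2n (u n))%nat.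
Proof.
  unfold count_below. rewrite seq_S, filter_app, length_app. simpl.
  now destruct (u n).
Qed.

Lemma count_below_le (u : nat -> bool) (n : nat) : (count_below u n <= n)%nat.
Proof.
  induction n as [|n IH]; [reflexivity|].
  rewrite count_below_succ. destruct (u n); simpl; lia.
Qed.

Lemma count_below_const_on (u : nat -> bool) (k l : nat) :
  (forall m, (k <= m < k + l)%nat -> u m = false) ->
  count_below u (k + l) = count_below u k.
Proof.
  induction l as [|l IH]; intros Hu; [now rewrite Nat.add_0_r|].
  rewrite Nat.add_succ_r, count_below_succ, Hu by lia.
  rewrite IH by (intros; apply Hu; lia). simpl. lia.
Qed.

Fixpoint bits_to_nat (f : nat -> bool) (k : nat) : nat :=
  match k with
  | O => O
  | S k => (2 * bits_to_nat (fun j => f (S j)) k + Nat.b2n (f O))%nat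
  end.

Lemma bits_to_nat_lt (f : nat -> bool) (k : nat) : (bits_to_nat f k < 2 ^ k)%nat.
Proof.
  revert f. induction k as [|k IH]; intros f; simpl; [lia|].
  specialize (IH (fun j => f (S j))). destruct (f O); simpl; lia.
Qed.

Lemma testbit_bits_to_nat (f : nat -> bool) (k j : nat) :
  (j < k)%nat -> Nat.testbit (bits_to_nat f k) j = f j.
Proof.
  revert f j. induction k as [|k IH]; intros f j Hj; [lia|]. cbn [bits_to_nat].
  destruct j as [|j].
  - apply Nat.testbit_0_r.
  - rewrite Nat.testbit_succ_r. apply (IH (fun j => f (S j))). lia.
Qed.

Lemma inv_ratio_bound (a s : nat) :
  (0 < a)%nat -> INR s / INR (a * s + 1) <= / INR a.
Proof.
  intros ha. assert (Ha : 0 < INR a) by (apply lt_0_INR; lia).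
  rewrite plus_INR, mult_INR. simpl INR.
  apply Rle_div_l; [pose proof (pos_INR s); nra|].
  rewrite Rmult_plus_distr_l, <- Rmult_assoc, Rinv_l by lra.
  pose proof (Rinv_0_lt_compat _ Ha). lra.
Qed.

Section Blocks.

Variable a : nat.
Hypothesis ha : (0 < a)%nat.

Fixpoint block_start (n : nat) : nat :=
  match n with
  | O => O
  | S n => (block_start n + a ^ n)%nat
  end.

Definition in_block (n m : nat) : Prop := (block_start n <= m < block_start (S n))%nat.

Lemma block_start_succ_geom (n : nat) : (a * block_start n + 1 = block_start (S n))%nat.
Proof.
  induction n as [|n IH]; simpl in *; [lia|].
  rewrite Nat.mul_add_distr_l. nia.
Qed.

Lemma block_start_mono (n n' : nat) : (n <= n')%nat -> (block_start n <= block_start n')%nat.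
Proof. induction 1; simpl; lia. Qed.

Lemma block_length_pos (n : nat) : (0 < a ^ n)%nat.
Proof. apply Nat.neq_0_lt_0, Nat.pow_nonzero. lia. Qed.

Lemma le_block_start (n : nat) : (n <= block_start n)%nat.
Proof.
  induction n as [|n IH]; simpl; [lia|].
  pose proof (block_length_pos n). lia.
Qed.

Lemma block_index_ex (m : nat) : {n | in_block n m}.
Proof.
  unfold in_block. induction m as [|m [n Hn]].
  - exists O. simpl. pose proof (block_length_pos 0). lia.
  - destruct (Compare_dec.lt_dec (S m) (block_start (S n))).
    + exists n. lia.
    + exists (S n). pose proof (block_length_pos (S n)).
      change (block_start (S (S n))) with (block_start (S n) + a ^ S n)%nat. lia.
Defined.

Definition block_index (m : nat) : nat := proj1_sig (block_index_ex m).

Lemma block_index_spec (m : nat) : in_block (block_index m) m.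
Proof. exact (proj2_sig (block_index_ex m)). Qed.

Lemma block_index_unique (n m : nat) : in_block n m -> block_index m = n.
Proof.
  unfold in_block. intros Hn. pose proof (block_index_spec m) as Hb. unfold in_block in Hb.
  destruct (Compare_dec.lt_eq_lt_dec (block_index m) n) as [[Hlt|Heq]|Hlt]; auto;
    pose proof (block_start_mono _ _ Hlt); lia.
Qed.

Definition encode_blocks (y : nat -> bool) (n : nat) : nat :=
  bits_to_nat (fun j => y (block_start n + j)%nat) (a ^ n).

Definition decode_blocks (z : nat -> nat) (m : nat) : bool :=
  Nat.testbit (z (block_index m)) (m - block_start (block_index m)).

Lemma encode_blocks_lt (y : nat -> bool) (n : nat) : (encode_blocks y n < 2 ^ (a ^ n))%nat.
Proof. apply bits_to_nat_lt. Qed.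

Lemma decode_encode_blocks (z : nat -> nat) (y : nat -> bool) (n m : nat) :
  in_block n m -> z n = encode_blocks y n -> decode_blocks z m = y m.
Proof.
  intros Hm Hz. unfold decode_blocks.
  rewrite (block_index_unique n m Hm), Hz.
  unfold in_block in Hm. simpl in Hm. unfold encode_blocks.
  rewrite testbit_bits_to_nat by lia. f_equal. lia.
Qed.

Definition diagonal (x : nat -> nat) (m : nat) : bool := negb (decode_blocks x m).

Lemma agree_diagonal_in_block (x : nat -> nat) (y : nat -> bool) (n m : nat) :
  in_block n m -> x n = encode_blocks y n -> agree (diagonal x) y m = false.
Proof.
  intros Hm Hx. unfold agree, diagonal.
  rewrite (decode_encode_blocks x y n m Hm Hx). now destruct (y m).
Qed.

Lemma count_below_block_end (u : nat -> bool) (n : nat) :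
  (forall m, in_block n m -> u m = false) ->
  (count_below u (block_start (S n)) <= block_start n)%nat.
Proof.
  intros Hu. simpl block_start.
  rewrite count_below_const_on by (intros m Hm; apply Hu; unfold in_block; simpl; lia).
  apply count_below_le.
Qed.

Lemma lower_density_le_inv (u : nat -> bool) :
  (forall N, exists n, (N <= n)%nat /\ forall m, in_block n m -> u m = false) ->
  Rbar_le (lower_density u) (/ INR a).
Proof.
  intros Hfreq. apply LimInf_seq_le_frequently. intros N.
  destruct (Hfreq N) as [n [HNn Hu]]. exists (block_start (S n)). split.
  - pose proof (le_block_start (S n)). lia.
  - rewrite <- block_start_succ_geom.
    apply Rle_trans with (INR (block_start n) / INR (a * block_start n + 1));
      [|now apply inv_ratio_bound].
    apply Rmult_le_compat_r.
    + apply Rlt_le, Rinv_0_lt_compat, lt_0_INR. lia.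
    + apply le_INR. rewrite block_start_succ_geom. now apply count_below_block_end.
Qed.

Lemma lower_density_agree_diagonal_le (x : nat -> nat) (y : nat -> bool) :
  (forall N, exists n, (N <= n)%nat /\ x n = encode_blocks y n) ->
  Rbar_le (lower_density (agree (diagonal x) y)) (/ INR a).
Proof.
  intros Hfreq. apply lower_density_le_inv. intros N.
  destruct (Hfreq N) as [n [HNn Hn]]. exists n. split; [exact HNn|].
  intros m Hm. exact (agree_diagonal_in_block x y n m Hm Hn).
Qed.

Lemma dneq_witness_of_d_witness (G : (nat -> bool) -> Prop) :
  d_witness (/ INR a) G ->
  dneq_witness (fun n => 2 ^ (a ^ n))%nat (fun z => exists y, G y /\ z = encode_blocks y).
Proof.
  intros HG. split.
  - intros z [y [_ ->]] n. apply encode_blocks_lt.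
  - intros x. destruct (HG (diagonal x)) as [y [Gy Hdens]].
    exists (encode_blocks y). split; [eauto|].
    apply NNPP. intros Hnot.
    apply (Rbar_lt_not_le _ _ Hdens), lower_density_agree_diagonal_le.
    apply frequently_of_not_eventually_not, Hnot.
Qed.

Lemma b_witness_of_bneq_witness (F : (nat -> nat) -> Prop) :
  bneq_witness (fun n => 2 ^ (a ^ n))%nat F ->
  b_witness (/ INR a) (fun z => exists x, F x /\ z = diagonal x).
Proof.
  intros HF y. destruct (HF (encode_blocks y) (encode_blocks_lt y)) as [x [Fx Hfreq]].
  exists (diagonal x). split; [eauto|].
  now apply lower_density_agree_diagonal_le.
Qed.

End Blocks.

Theorem mainTheorem8 (a : nat) (ha : (0 < a)%nat) :
  let h := fun n : nat => (2 ^ (a ^ n))%nat in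
  (* d(≠*,h) <= d(1/a) *)
  (forall G : (nat -> bool) -> Prop, d_witness (/ INR a) G ->
     exists G' : (nat -> nat) -> Prop, dneq_witness h G' /\ card_le G' G) /\
  (* b(1/a) <= b(≠*,h) *)
  (forall F : (nat -> nat) -> Prop, bneq_witness h F ->
     exists F' : (nat -> bool) -> Prop, b_witness (/ INR a) F' /\ card_le F' F).
Proof.
  intros h. split.
  - intros G HG. eexists. split.
    + exact (dneq_witness_of_d_witness a ha G HG).
    + apply card_le_image. exact (inhabits (fun _ => false)).
  - intros F HF. eexists. split.
    + exact (b_witness_of_bneq_witness a ha F HF).
    + apply card_le_image. exact (inhabits (fun _ => O)).
Qed.
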